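(* There is no real number $s$ such that $S(a,b)\le\lambda_s(a,b)$ holds for all $a,b>0$.
   Context: For $a,b>0$ with $a\neq b$ define $$\lambda_s(a,b)=\begin{cases}\dfrac{s-1}{s+1}\cdot\dfrac{a^{s+1}+b^{s+1}-2\left(\frac{a+b}{2}\right)^{s+1}}{a^s+b^s-2\left(\frac{a+b}{2}\right)^s}, & s\in\mathbb{R}\setminus\{-1,0,1\},\\[3mm] \dfrac{2\log\frac{a+b}{2}-\log a-\log b}{\frac{1}{2a}+\frac{1}{2b}-\frac{2}{a+b}}, & s=-1,\\[3mm] \dfrac{a\log a+b\log b-(a+b)\log\frac{a+b}{2}}{2\log\frac{a+b}{2}-\log a-\log b}, & s=0,\\[3mm] \dfrac{(b-a)^2}{4\left(a\log a+b\log b-(a+b)\log\frac{a+b}{2}\right)}, & s=1,\end{cases}$$ and $\lambda_s(a,a)=a$. The Gini mean is $S(a,b)=a^{a/(a+b)}\,b^{b/(a+b)}$. *)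

From Stdlib Require Import Reals.
Open Scope R_scope.

Definition gini_S (a b : R) : R :=
  Rpower a (a / (a + b)) * Rpower b (b / (a + b)).

Definition lambda_mean (s a b : R) : R :=
  if Req_EM_T a b then a else
  let m := (a + b) / 2 in
  if Req_EM_T s (-1) then
    (2 * ln m - ln a - ln b) / (/ (2 * a) + / (2 * b) - 2 / (a + b))
  else if Req_EM_T s 0 then
    (a * ln a + b * ln b - (a + b) * ln m) / (2 * ln m - ln a - ln b)
  else if Req_EM_T s 1 then
    (b - a) ^ 2 / (4 * (a * ln a + b * ln b - (a + b) * ln m))
  else
    (s - 1) / (s + 1) *
    ((Rpower a (s + 1) + Rpower b (s + 1) - 2 * Rpower m (s + 1)) /
     (Rpower a s + Rpower b s - 2 * Rpower m s)).

From Stdlib Require Import Reals Lra.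
From Coquelicot Require Import Coquelicot.
Open Scope R_scope.

(* We look at the pair (1, b) as b -> 0+.  The Gini mean S(1,b) = b^(b/(1+b))
   tends to 1, because b ln b -> 0.  On the other hand, for every s the
   quantity lambda_s(1,b) tends to a limit L < 1:
   - for s < 0 (including s = -1) and for s = 0 the limit is 0 (after scaling
     numerator and denominator by a suitable power of b, or because the
     denominator 2 ln((1+b)/2) - ln b blows up);
   - for s = 1 the limit is 1/(4 ln 2);
   - for s > 0, s <> 1 the limit is (s-1)(v-1)/((s+1)(v-2)) with v = 2^s, and
     L < 1 reduces to 2*2^s - (s+3) having the sign of s - 1, which follows
     from the convexity bound e^x >= 1 + x.
   Hence lambda_s(1,b) < S(1,b) for b small enough. *)

Section LimitAlgebra.

Context {F : (R -> Prop) -> Prop} {FF : Filter F}.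

Lemma lim_const (c : R) : filterlim (fun _ => c) F (locally c).
Proof. apply filterlim_const. Qed.

Lemma lim_plus (f g : R -> R) (a b : R) :
  filterlim f F (locally a) -> filterlim g F (locally b) ->
  filterlim (fun x => f x + g x) F (locally (a + b)).
Proof.
  intros Hf Hg. eapply filterlim_comp_2; [exact Hf | exact Hg |].
  exact (filterlim_plus a b).
Qed.

Lemma lim_mult (f g : R -> R) (a b : R) :
  filterlim f F (locally a) -> filterlim g F (locally b) ->
  filterlim (fun x => f x * g x) F (locally (a * b)).
Proof.
  intros Hf Hg. eapply filterlim_comp_2; [exact Hf | exact Hg |].
  exact (@filterlim_mult R_AbsRing a b).
Qed.

Lemma lim_minus (f g : R -> R) (a b : R) :
  filterlim f F (locally a) -> filterlim g F (locally b) ->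
  filterlim (fun x => f x - g x) F (locally (a - b)).
Proof.
  intros Hf Hg.
  assert (Hopp : filterlim (fun x => -1 * g x) F (locally (-1 * b)))
    by (apply lim_mult; [apply lim_const | exact Hg]).
  replace (a - b) with (a + -1 * b) by ring.
  eapply filterlim_ext; [| exact (lim_plus _ _ _ _ Hf Hopp)].
  intros x; simpl; ring.
Qed.

Lemma lim_cont (h f : R -> R) (a : R) :
  continuous h a -> filterlim f F (locally a) ->
  filterlim (fun x => h (f x)) F (locally (h a)).
Proof. intros Hh Hf. eapply filterlim_comp; [exact Hf | exact Hh]. Qed.

Lemma lim_div (f g : R -> R) (a b : R) :
  filterlim f F (locally a) -> filterlim g F (locally b) -> b <> 0 ->
  filterlim (fun x => f x / g x) F (locally (a / b)).
Proof.
  intros Hf Hg Hb. apply lim_mult; [exact Hf |].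
  apply (lim_cont (fun y => / y)); [apply continuous_Rinv |]; assumption.
Qed.

Lemma lim_pow (f : R -> R) (a : R) (n : nat) :
  filterlim f F (locally a) -> filterlim (fun x => f x ^ n) F (locally (a ^ n)).
Proof.
  intros Hf. induction n as [| n IH]; simpl;
    [apply lim_const | apply lim_mult; assumption].
Qed.

Lemma lim_ln (f : R -> R) (a : R) :
  0 < a -> filterlim f F (locally a) ->
  filterlim (fun x => ln (f x)) F (locally (ln a)).
Proof. intros Ha Hf. apply lim_cont; [apply continuous_ln |]; assumption. Qed.

Lemma lim_rpow (f : R -> R) (a p : R) :
  0 < a -> filterlim f F (locally a) ->
  filterlim (fun x => Rpower (f x) p) F (locally (Rpower a p)).
Proof.
  intros Ha Hf. apply (lim_cont (fun y => Rpower y p)); [| exact Hf].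
  unfold Rpower. apply continuous_exp_comp.
  apply (@continuous_mult R_UniformSpace R_AbsRing (fun _ => p) ln);
    [apply continuous_const | apply continuous_ln; exact Ha].
Qed.

Lemma eventually_lt_of_lim (f g : R -> R) (a c : R) :
  filterlim f F (locally a) -> filterlim g F (locally c) -> c < a ->
  F (fun x => g x < f x).
Proof.
  intros Hf Hg Hca.
  assert (Hpos : locally (a - c) (fun u => 0 < u))
    by (apply open_gt; lra).
  apply (filter_imp (fun x => 0 < f x - g x)); [intros x; lra |].
  exact (lim_minus _ _ _ _ Hf Hg _ Hpos).
Qed.

Lemma lim_eq (f : R -> R) (a b : R) :
  filterlim f F (locally a) -> a = b -> filterlim f F (locally b).
Proof. intros H <-; exact H. Qed.

End LimitAlgebra.

Lemma eventually_unit_interval : at_right 0 (fun x => 0 < x < 1).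
Proof.
  assert (Hlt1 : locally 0 (fun x => x < 1)) by (apply open_lt; lra).
  unfold at_right, within.
  apply (filter_imp (fun x => x < 1)); [intros x Hx Hx0; lra | exact Hlt1].
Qed.

Lemma lim_right_ext (f g : R -> R) (l : R) :
  (forall x, 0 < x < 1 -> f x = g x) ->
  filterlim g (at_right 0) (locally l) -> filterlim f (at_right 0) (locally l).
Proof.
  intros Hfg. apply filterlim_ext_loc.
  apply (filter_imp (fun x => 0 < x < 1)); [| exact eventually_unit_interval].
  intros x Hx. symmetry. exact (Hfg x Hx).
Qed.

Lemma lim_id_right : filterlim (fun x => x) (at_right 0) (locally 0).
Proof.
  apply (filterlim_filter_le_1 (F := locally 0)).
  - apply filter_le_within.
  - apply filterlim_id.
Qed.

(* x ln x -> 0, via the substitution y = ln x -> -oo and y e^y -> 0. *)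
Lemma lim_xlnx : filterlim (fun x => x * ln x) (at_right 0) (locally 0).
Proof.
  apply filterlim_ext_loc with (fun x => ln x * exp (ln x)).
  - apply (filter_imp (fun x => 0 < x < 1)); [| exact eventually_unit_interval].
    intros x Hx. rewrite exp_ln by lra. ring.
  - apply (filterlim_comp _ _ _ ln (fun y => y * exp y) _ (Rbar_locally m_infty)).
    + apply is_lim_ln_0.
    + apply is_lim_mul_exp_m.
Qed.

(* x^q -> 0 for q > 0, since q ln x -> -oo. *)
Lemma lim_rpow_right0 (q : R) : 0 < q -> filterlim (fun x => Rpower x q) (at_right 0) (locally 0).
Proof.
  intros Hq. unfold Rpower.
  eapply filterlim_comp with (G := Rbar_locally m_infty); [| apply is_lim_exp_m].
  intros P [M HM]. unfold filtermap.
  apply (filter_imp (fun x => ln x < M / q)).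
  - intros x Hx. apply HM.
    apply (Rmult_lt_compat_l q) in Hx; [| exact Hq].
    replace (q * (M / q)) with M in Hx by (field; lra). exact Hx.
  - apply (is_lim_ln_0 (fun y => y < M / q)). exists (M / q). auto.
Qed.

(* -ln x + 2 ln((1+x)/2) -> +oo, since the second term stays bounded below. *)
Lemma lim_log_gap_infty :
  filterlim (fun x => 2 * ln ((1 + x) / 2) - ln 1 - ln x) (at_right 0) (Rbar_locally p_infty).
Proof.
  intros P [M HM]. unfold filtermap.
  assert (Hln : at_right 0 (fun x => ln x < - M - 2 * ln 2))
    by (apply (is_lim_ln_0 (fun y => y < - M - 2 * ln 2)); exists (- M - 2 * ln 2); auto).
  generalize (filter_and _ _ Hln eventually_unit_interval).
  apply filter_imp. intros x [Hx Hx01]. apply HM. rewrite ln_1.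
  assert (Hmid : ln (/ 2) < ln ((1 + x) / 2)) by (apply ln_increasing; lra).
  rewrite ln_Rinv in Hmid by lra. lra.
Qed.

Ltac lim_auto :=
  first
  [ apply lim_xlnx
  | apply lim_rpow_right0; lra
  | apply lim_id_right
  | apply lim_const
  | apply lim_ln; [| lim_auto]
  | apply lim_rpow; [| lim_auto]
  | apply lim_pow; lim_auto
  | apply lim_minus; lim_auto
  | apply lim_plus; lim_auto
  | apply lim_div; [lim_auto | lim_auto |]
  | apply lim_mult; lim_auto ].

Lemma Rpower_base1 (x : R) : Rpower 1 x = 1.
Proof. unfold Rpower. rewrite ln_1, Rmult_0_r. apply exp_0. Qed.

Lemma lim_gini_S : filterlim (fun b => gini_S 1 b) (at_right 0) (locally 1).
Proof.
  apply lim_right_ext with (fun b => exp (b * ln b / (1 + b))).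
  - intros b Hb. unfold gini_S, Rpower. rewrite ln_1, Rmult_0_r, exp_0, Rmult_1_l.
    f_equal. field. lra.
  - apply (lim_eq _ (exp 0)); [| apply exp_0].
    apply lim_cont; [apply continuous_exp |].
    eapply lim_eq; [lim_auto | field]. lra.
Qed.

Lemma lambda_mean_generic (s a b : R) :
  a <> b -> s <> -1 -> s <> 0 -> s <> 1 ->
  lambda_mean s a b =
  (s - 1) / (s + 1) *
  ((Rpower a (s + 1) + Rpower b (s + 1) - 2 * Rpower ((a + b) / 2) (s + 1)) /
   (Rpower a s + Rpower b s - 2 * Rpower ((a + b) / 2) s)).
Proof.
  intros Hab Hm1 H0 H1. unfold lambda_mean.
  destruct (Req_EM_T a b); [contradiction |].
  destruct (Req_EM_T s (-1)); [contradiction |].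
  destruct (Req_EM_T s 0); [contradiction |].
  destruct (Req_EM_T s 1); [contradiction | reflexivity].
Qed.

Lemma lambda_mean_minus1 (a b : R) :
  a <> b ->
  lambda_mean (-1) a b =
  (2 * ln ((a + b) / 2) - ln a - ln b) / (/ (2 * a) + / (2 * b) - 2 / (a + b)).
Proof.
  intros Hab. unfold lambda_mean.
  destruct (Req_EM_T a b); [contradiction |].
  destruct (Req_EM_T (-1) (-1)); [reflexivity | lra].
Qed.

Lemma lambda_mean_zero (a b : R) :
  a <> b ->
  lambda_mean 0 a b =
  (a * ln a + b * ln b - (a + b) * ln ((a + b) / 2)) /
  (2 * ln ((a + b) / 2) - ln a - ln b).
Proof.
  intros Hab. unfold lambda_mean.
  destruct (Req_EM_T a b); [contradiction |].
  destruct (Req_EM_T 0 (-1)); [lra |].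
  destruct (Req_EM_T 0 0); [reflexivity | lra].
Qed.

Lemma lambda_mean_one (a b : R) :
  a <> b ->
  lambda_mean 1 a b =
  (b - a) ^ 2 / (4 * (a * ln a + b * ln b - (a + b) * ln ((a + b) / 2))).
Proof.
  intros Hab. unfold lambda_mean.
  destruct (Req_EM_T a b); [contradiction |].
  destruct (Req_EM_T 1 (-1)); [lra |].
  destruct (Req_EM_T 1 0); [lra |].
  destruct (Req_EM_T 1 1); [reflexivity | lra].
Qed.

(* Comparison of 2^s with 2 and of 2*2^s with s+3, from the tangent-line bound
   2^x = e^(x ln 2) >= 1 + x ln 2 together with ln 2 > 1/2. *)

Lemma Rpower2_tangent (x : R) : 1 + x * ln 2 <= Rpower 2 x.
Proof. unfold Rpower. apply exp_ineq1_le. Qed.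

Lemma Rpower2_small (s : R) : 0 < s < 1 -> Rpower 2 s < 2 /\ 2 * Rpower 2 s < s + 3.
Proof.
  intros Hs. assert (Hl : / 2 < ln 2) by apply ln_lt_2.
  assert (Hv2 : Rpower 2 s < 2)
    by (rewrite <- (Rpower_1 2) at 2 by lra; apply Rpower_lt; lra).
  split; [exact Hv2 |].
  assert (Hvz : Rpower 2 s * Rpower 2 (1 - s) = 2).
  { rewrite <- Rpower_plus. replace (s + (1 - s)) with 1 by ring. apply Rpower_1; lra. }
  assert (Hz := Rpower2_tangent (1 - s)).
  assert (Hv0 : 0 < Rpower 2 s) by apply exp_pos.
  set (w := 1 + (1 - s) * ln 2) in *.
  assert (Hvw : Rpower 2 s * w <= Rpower 2 s * Rpower 2 (1 - s))
    by (apply Rmult_le_compat_l; lra).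
  assert (Hw4 : 4 < (s + 3) * w).
  { unfold w. assert (0 < (1 - s) * ((s + 3) * ln 2 - 1)) by (apply Rmult_lt_0_compat; nra).
    nra. }
  assert (Hw0 : 0 < w) by (unfold w; nra).
  destruct (Rlt_or_le (2 * Rpower 2 s) (s + 3)) as [Hlt | Hge]; [exact Hlt |].
  assert ((s + 3) * w <= 2 * Rpower 2 s * w) by (apply Rmult_le_compat_r; lra).
  lra.
Qed.

Lemma Rpower2_large (s : R) : 1 < s -> 2 < Rpower 2 s /\ s + 3 < 2 * Rpower 2 s.
Proof.
  intros Hs. assert (Hl : / 2 < ln 2) by apply ln_lt_2.
  assert (Hv : Rpower 2 s = 2 * Rpower 2 (s - 1)).
  { replace s with (1 + (s - 1)) at 1 by ring. rewrite Rpower_plus, Rpower_1; lra. }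
  assert (Hz := Rpower2_tangent (s - 1)).
  assert (Hk : (s - 1) / 2 < (s - 1) * ln 2) by nra.
  lra.
Qed.

Lemma Rpower_half (p : R) : Rpower (/ 2) p = / Rpower 2 p.
Proof. rewrite <- Rpower_Ropp. unfold Rpower. rewrite ln_Rinv by lra. f_equal; ring. Qed.

Lemma Rpower2_sign (s : R) :
  0 < s -> s <> 1 ->
  (Rpower 2 s < 2 /\ 2 * Rpower 2 s < s + 3) \/ (2 < Rpower 2 s /\ s + 3 < 2 * Rpower 2 s).
Proof.
  intros Hs Hs1.
  destruct (Rdichotomy s 1 Hs1) as [H | H];
    [left; apply Rpower2_small | right; apply Rpower2_large]; lra.
Qed.

(* For s > 0, s <> 1, the value (s-1)/(s+1) * (1 - 2^-s)/(1 - 2^(1-s)) is below 1: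
   writing v = 2^s, its difference with 1 is (s+3-2v)/((s+1)(v-2)) < 0. *)
Lemma lambda_limit_pos_lt1 (s : R) :
  0 < s -> s <> 1 ->
  (s - 1) / (s + 1) * ((1 - 2 * Rpower (/ 2) (s + 1)) / (1 - 2 * Rpower (/ 2) s)) < 1.
Proof.
  intros Hs Hs1.
  assert (Hsign := Rpower2_sign s Hs Hs1).
  rewrite !Rpower_half, Rpower_plus, Rpower_1 by lra.
  assert (Hv0 : 0 < Rpower 2 s) by apply exp_pos.
  set (v := Rpower 2 s) in *.
  assert (Hdiff : (s - 1) / (s + 1) * ((1 - 2 * / (v * 2)) / (1 - 2 * / v)) - 1
                  = (s + 3 - 2 * v) / ((s + 1) * (v - 2))).
  { field. repeat split; lra. }
  enough ((s + 3 - 2 * v) / ((s + 1) * (v - 2)) < 0) by lra.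
  destruct Hsign as [[Hv2 Hlin] | [Hv2 Hlin]].
  - apply Rdiv_pos_neg; [lra | nra].
  - apply Rdiv_neg_pos; [lra | nra].
Qed.

Definition tends_below_one (f : R -> R) : Prop :=
  exists L, L < 1 /\ filterlim f (at_right 0) (locally L).

(* s > 0: lambda_s(1,b) -> (s-1)/(s+1) * (1 - 2^-s)/(1 - 2^(1-s)). *)
Lemma lambda_tends_pos (s : R) :
  0 < s -> s <> 1 -> tends_below_one (fun b => lambda_mean s 1 b).
Proof.
  intros Hs Hs1. eexists. split; [apply (lambda_limit_pos_lt1 s Hs Hs1) |].
  apply lim_right_ext with
    (fun b => (s - 1) / (s + 1) *
       ((1 + Rpower b (s + 1) - 2 * Rpower ((1 + b) / 2) (s + 1)) /
        (1 + Rpower b s - 2 * Rpower ((1 + b) / 2) s))).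
  - intros b Hb. rewrite lambda_mean_generic, !Rpower_base1 by lra. reflexivity.
  - (* the only nontrivial side condition: the limit of the denominator is nonzero *)
    eapply lim_eq; [lim_auto |]; rewrite ?Rplus_0_r, ?Rdiv_1_l; try lra.
    rewrite Rpower_half. intros Heq.
    assert (Hv0 : 0 < Rpower 2 s) by apply exp_pos.
    assert (Hv2 : Rpower 2 s - 2 = Rpower 2 s * (1 - 2 * / Rpower 2 s)) by (field; lra).
    rewrite Heq, Rmult_0_r in Hv2.
    destruct (Rpower2_sign s Hs Hs1) as [[Hv _] | [Hv _]]; lra.
Qed.

Lemma Rdiv_scale (x y r : R) : r <> 0 -> x / y = (x * r) / (y * r).
Proof.
  intros Hr. unfold Rdiv. rewrite Rinv_mult.
  replace (x * r * (/ y * / r)) with (x * / y * (r * / r)) by ring.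
  rewrite Rinv_r by exact Hr. ring.
Qed.

(* s < 0, s <> -1: after multiplying through by b^(-s), lambda_s(1,b) -> 0. *)
Lemma lambda_tends_neg (s : R) :
  s < 0 -> s <> -1 -> tends_below_one (fun b => lambda_mean s 1 b).
Proof.
  intros Hs Hs1. exists 0. split; [lra |].
  apply lim_right_ext with
    (fun b => (s - 1) / (s + 1) *
       ((Rpower b (- s) + b - 2 * Rpower ((1 + b) / 2) (s + 1) * Rpower b (- s)) /
        (Rpower b (- s) + 1 - 2 * Rpower ((1 + b) / 2) s * Rpower b (- s)))).
  - intros b Hb. rewrite lambda_mean_generic, !Rpower_base1 by lra.
    assert (Hr : Rpower b (- s) <> 0) by (apply Rgt_not_eq, exp_pos).
    assert (H1 : Rpower b (s + 1) * Rpower b (- s) = b).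
    { rewrite <- Rpower_plus. replace (s + 1 + - s) with 1 by ring. apply Rpower_1; lra. }
    assert (H0 : Rpower b s * Rpower b (- s) = 1).
    { rewrite <- Rpower_plus. replace (s + - s) with 0 by ring. apply Rpower_O; lra. }
    rewrite (Rdiv_scale (1 + Rpower b (s + 1) - 2 * Rpower ((1 + b) / 2) (s + 1)) _ _ Hr).
    f_equal. f_equal; lra.
  - eapply lim_eq; [lim_auto | ..]; lra.
Qed.

(* s = -1: after multiplying through by b, lambda_{-1}(1,b) -> 0 / (1/2) = 0. *)
Lemma lambda_tends_minus1 : tends_below_one (fun b => lambda_mean (-1) 1 b).
Proof.
  exists 0. split; [lra |].
  apply lim_right_ext with
    (fun b => (2 * (b * ln ((1 + b) / 2)) - b * ln b) / (b / 2 + / 2 - 2 * b / (1 + b))).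
  - intros b Hb. rewrite lambda_mean_minus1, ln_1 by lra.
    rewrite (Rdiv_scale _ _ b) by lra. f_equal; field; lra.
  - eapply lim_eq; [lim_auto | ..]; lra.
Qed.

(* s = 0: the numerator tends to ln 2 while the denominator tends to +oo. *)
Lemma lambda_tends_zero : tends_below_one (fun b => lambda_mean 0 1 b).
Proof.
  exists 0. split; [lra |].
  apply lim_right_ext with
    (fun b => (1 * ln 1 + b * ln b - (1 + b) * ln ((1 + b) / 2)) *
              / (2 * ln ((1 + b) / 2) - ln 1 - ln b)).
  - intros b Hb. rewrite lambda_mean_zero by lra. reflexivity.
  - assert (Hinv : filterlim (fun b => / (2 * ln ((1 + b) / 2) - ln 1 - ln b))
                              (at_right 0) (locally 0)).
    { eapply filterlim_comp; [apply lim_log_gap_infty |].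
      apply (filterlim_Rbar_inv p_infty). discriminate. }
    eapply lim_eq; [apply lim_mult; [lim_auto | exact Hinv] | ..]; lra.
Qed.

Lemma lambda_tends_one : tends_below_one (fun b => lambda_mean 1 1 b).
Proof.
  assert (Hl : / 2 < ln 2) by apply ln_lt_2.
  exists (/ (4 * ln 2)). split.
  - rewrite <- Rinv_1. apply Rinv_lt_contravar; lra.
  - apply lim_right_ext with
      (fun b => (b - 1) ^ 2 / (4 * (1 * ln 1 + b * ln b - (1 + b) * ln ((1 + b) / 2)))).
    + intros b Hb. rewrite lambda_mean_one by lra. reflexivity.
    + eapply lim_eq; [lim_auto | ..]; rewrite ?ln_1, ?Rplus_0_r, ?Rdiv_1_l, ?ln_Rinv by lra;
        try lra.
      field. lra.
Qed.

Lemma lambda_tends_below_one (s : R) : tends_below_one (fun b => lambda_mean s 1 b).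
Proof.
  destruct (Rtotal_order s 0) as [H | [-> | H]].
  - destruct (Req_dec s (-1)) as [-> | H1];
      [apply lambda_tends_minus1 | apply lambda_tends_neg; assumption].
  - apply lambda_tends_zero.
  - destruct (Req_dec s 1) as [-> | H1];
      [apply lambda_tends_one | apply lambda_tends_pos; assumption].
Qed.

Theorem theorem3 :
  ~ (exists s : R, forall a b : R, 0 < a -> 0 < b ->
       gini_S a b <= lambda_mean s a b).
Proof.
  intros [s Hle].
  (* S(1,b) -> 1 while lambda_s(1,b) -> L < 1, so some b in (0,1) breaks the bound. *)
  destruct (lambda_tends_below_one s) as [L [HL Hlim]].
  assert (Hlt := eventually_lt_of_lim _ _ _ _ lim_gini_S Hlim HL).
  destruct (@Hierarchy.filter_ex _ _ (at_right_proper_filter 0) _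
              (filter_and _ _ Hlt eventually_unit_interval)) as [b [Hgap Hb01]].
  specialize (Hle 1 b Rlt_0_1 (proj1 Hb01)). lra.
Qed.
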